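(* Let $(\mathcal{C},d,\chi,\eta)$ be a symmetric monoidal anti-involutive category with monoidal positivity structure $P$. Let $(-1)^F$ be a monoidal anti-involutive $B\mathbb{Z}/2$-action which refines to a (not necessarily monoidal) anti-involutive $B\mathbb{Z}/4$-action $i^F$. Let $\eta'=\eta\circ(-1)^F$ and let $\chi'$ be the monoidal data $\chi'_{x,y}:=\chi_{x,y}\circ i^F_{dx\otimes dy}\circ(i^F_{dx}\otimes i^F_{dy})^{-1}$. Let $P_{i^F}$ be the collection of composites $c\xrightarrow{i^F_c}c\xrightarrow{h}dc$ for $h\in P$. Then $(\mathcal{C},d,\chi,\eta)$ with positivity structure $P$ is symmetric monoidally dagger equivalent to $(\mathcal{C},d,\chi',\eta')$ with positivity structure $P_{i^F}$, i.e. $\mathcal{C}_P\simeq\mathcal{C}'_{P_{i^F}}$ as symmetric monoidal dagger categories, where $\mathcal{C}'=(\mathcal{C},d,\chi',\eta')$.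
   Context: A symmetric monoidal anti-involutive category $(\mathcal{C},d,\chi,\eta)$: a symmetric monoidal category with a symmetric monoidal functor $d\colon\mathcal{C}\to\mathcal{C}^{\mathrm{op}}$ (monoidal structure $\chi_{x,y}\colon dx\otimes dy\to d(x\otimes y)$, $u\colon1\to d1$) and a monoidal natural isomorphism $\eta\colon\mathrm{id}\Rightarrow d^2$ with $d(\eta_x)\circ\eta_{dx}=\mathrm{id}_{dx}$. A Hermitian pairing is an isomorphism $h\colon c\to dc$ with $d(h)\circ\eta_c=h$; $\mathrm{Herm}\,\mathcal{C}$ has objects $(c,h)$, morphisms those of $\mathcal{C}$, dagger $f^\dagger=h_1^{-1}\circ d(f)\circ h_2$, tensor $(c_1,h_1)\otimes(c_2,h_2)=(c_1\otimes c_2,\chi\circ(h_1\otimes h_2))$. A (monoidal) positivity structure is a collection $P$ of objects of $\mathrm{Herm}\,\mathcal{C}$, surjecting onto objects of $\mathcal{C}$, closed under transfer $h\mapsto d(g)\circ h\circ g$ along isomorphisms $g$ (and under tensor product); $\mathcal{C}_P$ is the full symmetric monoidal dagger subcategory of $\mathrm{Herm}\,\mathcal{C}$ on $P$. A $BA$-action ($A$ abelian) is a family of monoidal natural automorphisms $a_\bullet$ of the identity functor with $a_c\circ a'_c=(aa')_c$; it is anti-involutive if $d(a_c)=(a^{-1})_{dc}$. Here $(-1)^F$ is a $B\mathbb{Z}/2$-action, and $i^F$ is a family of natural automorphisms of the identity forming a $\mathbb{Z}/4$-action with $i^F\circ i^F=(-1)^F$, anti-involutive in the sense $d(i^F_c)=(i^F_{dc})^{-1}$,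 but not required to be monoidal. *)

From Stdlib Require Import IndefiniteDescription.

Record Cat := {
  ob :> Type;
  hom : ob -> ob -> Type;
  idm : forall x, hom x x;
  comp : forall x y z, hom y z -> hom x y -> hom x z;
  comp_assoc : forall w x y z (h : hom y z) (g : hom x y) (f : hom w x),
    comp _ _ _ h (comp _ _ _ g f) = comp _ _ _ (comp _ _ _ h g) f;
  comp_id_l : forall x y (f : hom x y), comp _ _ _ (idm y) f = f;
  comp_id_r : forall x y (f : hom x y), comp _ _ _ f (idm x) = f }.

Arguments hom {c} _ _.
Arguments idm {c} x.
Arguments comp {c x y z} _ _.
Notation "g ∘ f" := (comp g f) (at level 40, left associativity).

Definition is_iso {C : Cat} {x y : C} (f : hom x y) : Prop :=
  exists g : hom y x, g ∘ f = idm x /\ f ∘ g = idm y.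

Record SMC := {
  scat :> Cat;
  tob : scat -> scat -> scat;
  tm : forall x x' y y' : scat, hom x x' -> hom y y' -> hom (tob x y) (tob x' y');
  tunit : scat;
  assoc : forall x y z : scat, hom (tob (tob x y) z) (tob x (tob y z));
  assoc_inv : forall x y z : scat, hom (tob x (tob y z)) (tob (tob x y) z);
  lunit : forall x : scat, hom (tob tunit x) x;
  lunit_inv : forall x : scat, hom x (tob tunit x);
  runit : forall x : scat, hom (tob x tunit) x;
  runit_inv : forall x : scat, hom x (tob x tunit);
  braid : forall x y : scat, hom (tob x y) (tob y x);
  tm_id : forall x y : scat, tm _ _ _ _ (idm x) (idm y) = idm (tob x y);
  tm_comp : forall (x x' x'' y y' y'' : scat) (f' : hom x' x'') (f : hom x x')
      (g' : hom y' y'') (g : hom y y'),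
    tm _ _ _ _ (f' ∘ f) (g' ∘ g) = tm _ _ _ _ f' g' ∘ tm _ _ _ _ f g;
  assoc_iso_l : forall x y z, assoc_inv x y z ∘ assoc x y z = idm _;
  assoc_iso_r : forall x y z, assoc x y z ∘ assoc_inv x y z = idm _;
  lunit_iso_l : forall x, lunit_inv x ∘ lunit x = idm _;
  lunit_iso_r : forall x, lunit x ∘ lunit_inv x = idm _;
  runit_iso_l : forall x, runit_inv x ∘ runit x = idm _;
  runit_iso_r : forall x, runit x ∘ runit_inv x = idm _;
  assoc_nat : forall (x x' y y' z z' : scat) (f : hom x x') (g : hom y y') (h : hom z z'),
    assoc x' y' z' ∘ tm _ _ _ _ (tm _ _ _ _ f g) h
    = tm _ _ _ _ f (tm _ _ _ _ g h) ∘ assoc x y z;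
  lunit_nat : forall (x x' : scat) (f : hom x x'),
    f ∘ lunit x = lunit x' ∘ tm _ _ _ _ (idm tunit) f;
  runit_nat : forall (x x' : scat) (f : hom x x'),
    f ∘ runit x = runit x' ∘ tm _ _ _ _ f (idm tunit);
  braid_nat : forall (x x' y y' : scat) (f : hom x x') (g : hom y y'),
    tm _ _ _ _ g f ∘ braid x y = braid x' y' ∘ tm _ _ _ _ f g;
  pentagon : forall w x y z : scat,
    assoc w x (tob y z) ∘ assoc (tob w x) y z
    = tm _ _ _ _ (idm w) (assoc x y z) ∘ assoc w (tob x y) z
      ∘ tm _ _ _ _ (assoc w x y) (idm z);
  triangle : forall x y : scat,
    tm _ _ _ _ (idm x) (lunit y) ∘ assoc x tunit y = tm _ _ _ _ (runit x) (idm y);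
  hexagon : forall x y z : scat,
    assoc y z x ∘ braid x (tob y z) ∘ assoc x y z
    = tm _ _ _ _ (idm y) (braid x z) ∘ assoc y x z ∘ tm _ _ _ _ (braid x y) (idm z);
  braid_sym : forall x y : scat, braid y x ∘ braid x y = idm (tob x y) }.

Arguments tob {s} _ _.
Arguments tm {s x x' y y'} _ _.
Arguments tunit s : clear implicits.
Arguments assoc {s} x y z.
Arguments lunit {s} x.
Arguments runit {s} x.
Arguments braid {s} x y.
Notation "x ⊗ y" := (tob x y) (at level 35, right associativity).
Notation "f ⊠ g" := (tm f g) (at level 35, right associativity).

Record AIData (C : SMC) := {
  dob : C -> C;
  dhom : forall x y : C, hom x y -> hom (dob y) (dob x);
  chi : forall x y : C, hom (dob x ⊗ dob y) (dob (x ⊗ y));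
  uu : hom (tunit C) (dob (tunit C));
  eta : forall x : C, hom x (dob (dob x)) }.

Arguments dob {C} _ _.
Arguments dhom {C} _ {x y} _.
Arguments chi {C} _ x y.
Arguments uu {C} _.
Arguments eta {C} _ x.

(* The conditions below say: d : C -> C^op is a (contravariant) functor,
   (chi, u) make it a symmetric (strong) monoidal functor C -> C^op
   (the coherence equations of C^op written out in C), and
   eta : id => d^2 is a monoidal natural isomorphism with
   d(eta_x) o eta_{dx} = id. *)
Record is_SMAI (C : SMC) (d : AIData C) : Prop := {
  d_id : forall x : C, dhom d (idm x) = idm (dob d x);
  d_comp : forall (x y z : C) (g : hom y z) (f : hom x y),
    dhom d (g ∘ f) = dhom d f ∘ dhom d g;
  chi_iso : forall x y : C, is_iso (chi d x y);
  u_iso : is_iso (uu d);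
  chi_nat : forall (x x' y y' : C) (f : hom x x') (g : hom y y'),
    dhom d (f ⊠ g) ∘ chi d x' y' = chi d x y ∘ (dhom d f ⊠ dhom d g);
  chi_assoc : forall x y z : C,
    chi d (x ⊗ y) z ∘ (chi d x y ⊠ idm (dob d z))
    = dhom d (assoc x y z) ∘ chi d x (y ⊗ z) ∘ (idm (dob d x) ⊠ chi d y z)
      ∘ assoc (dob d x) (dob d y) (dob d z);
  chi_lunit : forall x : C,
    chi d (tunit C) x ∘ (uu d ⊠ idm (dob d x)) = dhom d (lunit x) ∘ lunit (dob d x);
  chi_runit : forall x : C,
    chi d x (tunit C) ∘ (idm (dob d x) ⊠ uu d) = dhom d (runit x) ∘ runit (dob d x);
  chi_braid : forall x y : C,
    dhom d (braid y x) ∘ chi d x y = chi d y x ∘ braid (dob d x) (dob d y);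
  eta_nat : forall (x y : C) (f : hom x y),
    dhom d (dhom d f) ∘ eta d x = eta d y ∘ f;
  eta_iso : forall x : C, is_iso (eta d x);
  eta_mon : forall x y : C,
    dhom d (chi d x y) ∘ eta d (x ⊗ y) = chi d (dob d x) (dob d y) ∘ (eta d x ⊠ eta d y);
  eta_unit : dhom d (uu d) ∘ eta d (tunit C) = uu d;
  eta_invol : forall x : C, dhom d (eta d x) ∘ eta d (dob d x) = idm (dob d x) }.

Definition is_hermitian (C : SMC) (d : AIData C) (c : C) (h : hom c (dob d c)) : Prop :=
  is_iso h /\ dhom d h ∘ eta d c = h.

Record is_mon_pos (C : SMC) (d : AIData C) (P : forall c : C, hom c (dob d c) -> Prop)
  : Prop := {
  pos_herm : forall (c : C) h, P c h -> is_hermitian C d c h;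
  pos_surj : forall c : C, exists h, P c h;
  pos_transfer : forall (c c' : C) (g : hom c c') (h : hom c' (dob d c')),
    is_iso g -> P c' h -> P c (dhom d g ∘ h ∘ g);
  pos_tensor : forall (c1 c2 : C) h1 h2, P c1 h1 -> P c2 h2 ->
    P (c1 ⊗ c2) (chi d c1 c2 ∘ (h1 ⊠ h2));
  pos_unit : P (tunit C) (uu d) }.

(* (-1)^F : a monoidal anti-involutive B(Z/2)-action, given by the
   natural automorphism m = (-1)^F of the identity functor. *)
Record is_mon_AI_Z2_action (C : SMC) (d : AIData C) (m : forall c : C, hom c c) : Prop := {
  m_nat : forall (x y : C) (f : hom x y), m y ∘ f = f ∘ m x;
  m_invol : forall x : C, m x ∘ m x = idm x;
  m_mon_tensor : forall x y : C, m (x ⊗ y) = m x ⊠ m y;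
  m_mon_unit : m (tunit C) = idm (tunit C);
  m_anti : forall x : C, dhom d (m x) = m (dob d x) }.

(* i^F : a (not necessarily monoidal) anti-involutive B(Z/4)-action
   refining m, given by the natural automorphism i = i^F (image of the
   generator of Z/4) with i o i = m. *)
Record is_AI_Z4_refinement (C : SMC) (d : AIData C) (m i : forall c : C, hom c c)
  : Prop := {
  i_nat : forall (x y : C) (f : hom x y), i y ∘ f = f ∘ i x;
  i_sq : forall x : C, i x ∘ i x = m x;
  i_anti_l : forall x : C, dhom d (i x) ∘ i (dob d x) = idm (dob d x);
  i_anti_r : forall x : C, i (dob d x) ∘ dhom d (i x) = idm (dob d x) }.

(* inverse of i^F_c (= i^F_c^3, using i o i = (-1)^F and (-1)^F o (-1)^F = id) *)
Definition i_inv (C : SMC) (m i : forall c : C, hom c c) (c : C) : hom c c := m c ∘ i c.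

Definition twisted (C : SMC) (d : AIData C) (m i : forall c : C, hom c c) : AIData C :=
  {| dob := dob d;
     dhom := fun x y f => dhom d f;
     chi := fun x y => chi d x y ∘ i (dob d x ⊗ dob d y)
                       ∘ (i_inv C m i (dob d x) ⊠ i_inv C m i (dob d y));
     uu := uu d ∘ i (tunit C);
     eta := fun x => eta d x ∘ m x |}.

Definition P_twist (C : SMC) (d : AIData C) (P : forall c : C, hom c (dob d c) -> Prop)
  (i : forall c : C, hom c c) : forall c : C, hom c (dob d c) -> Prop :=
  fun c h' => exists h, P c h /\ h' = h ∘ i c.

Record SMDC := {
  dsmc :> SMC;
  dag : forall x y : dsmc, hom x y -> hom y x }.
Arguments dag {s x y} _.

Definition is_unitary {C : SMDC} {x y : C} (f : hom x y) : Prop :=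
  dag f ∘ f = idm x /\ f ∘ dag f = idm y.

Record SMDFunctor (A B : SMDC) := {
  Fo : A -> B;
  Fm : forall x y : A, hom x y -> hom (Fo x) (Fo y);
  F_id : forall x : A, Fm _ _ (idm x) = idm (Fo x);
  F_comp : forall (x y z : A) (g : hom y z) (f : hom x y), Fm _ _ (g ∘ f) = Fm _ _ g ∘ Fm _ _ f;
  F_dag : forall (x y : A) (f : hom x y), Fm _ _ (dag f) = dag (Fm _ _ f);
  phi : forall x y : A, hom (Fo x ⊗ Fo y) (Fo (x ⊗ y));
  phi0 : hom (tunit B) (Fo (tunit A));
  phi_unitary : forall x y : A, is_unitary (phi x y);
  phi0_unitary : is_unitary phi0;
  phi_nat : forall (x x' y y' : A) (f : hom x x') (g : hom y y'),
    Fm _ _ (f ⊠ g) ∘ phi x y = phi x' y' ∘ (Fm _ _ f ⊠ Fm _ _ g);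
  phi_assoc : forall x y z : A,
    Fm _ _ (assoc x y z) ∘ phi (x ⊗ y) z ∘ (phi x y ⊠ idm (Fo z))
    = phi x (y ⊗ z) ∘ (idm (Fo x) ⊠ phi y z) ∘ assoc (Fo x) (Fo y) (Fo z);
  phi_lunit : forall x : A,
    Fm _ _ (lunit x) ∘ phi (tunit A) x ∘ (phi0 ⊠ idm (Fo x)) = lunit (Fo x);
  phi_runit : forall x : A,
    Fm _ _ (runit x) ∘ phi x (tunit A) ∘ (idm (Fo x) ⊠ phi0) = runit (Fo x);
  phi_braid : forall x y : A,
    Fm _ _ (braid x y) ∘ phi x y = phi y x ∘ braid (Fo x) (Fo y) }.
Arguments Fo {A B} _ _.
Arguments Fm {A B} _ {x y} _.

Definition smd_equivalent (A B : SMDC) : Prop :=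
  exists F : SMDFunctor A B,
    (forall (x y : A) (g : hom (Fo F x) (Fo F y)), exists f : hom x y, Fm F f = g) /\
    (forall (x y : A) (f f' : hom x y), Fm F f = Fm F f' -> f = f') /\
    (forall y : B, exists (x : A) (u : hom (Fo F x) y), is_unitary u).

Definition inv_of {C : Cat} {x y : C} (f : hom x y) (H : is_iso f) : hom y x :=
  proj1_sig (constructive_indefinite_description _ H).


Definition Pob (C : SMC) (d : AIData C) (P : forall c : C, hom c (dob d c) -> Prop) : Type :=
  { c : C & { h : hom c (dob d c) | P c h } }.

Definition CP_cat (C : SMC) (d : AIData C) (P : forall c : C, hom c (dob d c) -> Prop) : Cat.
Proof.
  refine {| ob := Pob C d P;
            hom := fun X Y => @hom C (projT1 X) (projT1 Y);
            idm := fun X => idm (projT1 X);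
            comp := fun X Y Z g f => g ∘ f |}.
  - intros; apply comp_assoc.
  - intros; apply comp_id_l.
  - intros; apply comp_id_r.
Defined.

Definition CP_smc (C : SMC) (d : AIData C) (P : forall c : C, hom c (dob d c) -> Prop)
  (HP : is_mon_pos C d P) : SMC.
Proof.
  refine {| scat := CP_cat C d P;
    tob := fun X Y =>
      existT _ (projT1 X ⊗ projT1 Y)
        (exist _ (chi d _ _ ∘ (proj1_sig (projT2 X) ⊠ proj1_sig (projT2 Y)))
           (pos_tensor C d P HP _ _ _ _ (proj2_sig (projT2 X)) (proj2_sig (projT2 Y))));
    tm := fun X X' Y Y' f g => @tm C _ _ _ _ f g;
    tunit := existT _ (tunit C) (exist _ (uu d) (pos_unit C d P HP));
    assoc := fun X Y Z => assoc (projT1 X) (projT1 Y) (projT1 Z);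
    assoc_inv := fun X Y Z => assoc_inv C (projT1 X) (projT1 Y) (projT1 Z);
    lunit := fun X => lunit (projT1 X);
    lunit_inv := fun X => lunit_inv C (projT1 X);
    runit := fun X => runit (projT1 X);
    runit_inv := fun X => runit_inv C (projT1 X);
    braid := fun X Y => braid (projT1 X) (projT1 Y) |}; intros; simpl.
  all: first [ apply tm_id | apply tm_comp | apply assoc_iso_l | apply assoc_iso_r
             | apply lunit_iso_l | apply lunit_iso_r | apply runit_iso_l | apply runit_iso_r
             | apply assoc_nat | apply lunit_nat | apply runit_nat | apply braid_nat
             | apply pentagon | apply triangle | apply hexagon | apply braid_sym ].
Defined.

(* C_P : dagger f^dagger = h_1^{-1} o d(f) o h_2 for f : (c1,h1) -> (c2,h2) *)
Definition CP (C : SMC) (d : AIData C) (P : forall c : C, hom c (dob d c) -> Prop)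
  (HP : is_mon_pos C d P) : SMDC :=
  {| dsmc := CP_smc C d P HP;
     dag := fun X Y (f : @hom C (projT1 X) (projT1 Y)) =>
       (inv_of (proj1_sig (projT2 X))
          (proj1 (pos_herm C d P HP _ _ (proj2_sig (projT2 X)))))
       ∘ dhom d f ∘ proj1_sig (projT2 Y) |}.

(* Write j = i^-1 = (-1)^F i.  The new tensorator is chi' = chi o delta, where
   delta_{a,b} = i_{a(x)b} o (j_a (x) j_b) is the coboundary of the natural automorphism i of
   the identity functor; a coboundary is a natural, normalised, symmetric 2-cocycle, so
   (d, chi', u o i_1) is again a symmetric monoidal functor.  Since d(i) = j, applying d
   turns delta into j_{a(x)b} o (i_a (x) i_b), and this equals delta exactly because
   (-1)^F is monoidal; that is what makes eta' = eta o (-1)^F monoidal for chi'.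
   The equivalence C_P -> C'_{P_i} is the identity on underlying objects and morphisms,
   sending (c, h) to (c, h o i_c): naturality of i makes it preserve daggers, and the
   tensor pairings agree on the nose, so all structure maps are identities. *)

From Stdlib Require Import IndefiniteDescription.

Lemma compA {C : Cat} {w x y z : C} (h : hom y z) (g : hom x y) (f : hom w x) :
  h ∘ (g ∘ f) = h ∘ g ∘ f.
Proof. apply comp_assoc. Qed.

Lemma tm_compE {C : SMC} {x x' x'' y y' y'' : C} (f' : hom x' x'') (f : hom x x')
  (g' : hom y' y'') (g : hom y y') :
  (f' ∘ f) ⊠ (g' ∘ g) = (f' ⊠ g') ∘ (f ⊠ g).
Proof. apply tm_comp. Qed.

Lemma tm_comp_idl {C : SMC} {x x' x'' : C} (y : C) (f : hom x' x'') (g : hom x x') :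
  (f ∘ g) ⊠ idm y = (f ⊠ idm y) ∘ (g ⊠ idm y).
Proof. rewrite <- tm_compE, comp_id_l. reflexivity. Qed.

Lemma tm_comp_idr {C : SMC} (x : C) {y y' y'' : C} (f : hom y' y'') (g : hom y y') :
  idm x ⊠ (f ∘ g) = (idm x ⊠ f) ∘ (idm x ⊠ g).
Proof. rewrite <- tm_compE, comp_id_l. reflexivity. Qed.

Lemma is_iso_comp {C : Cat} {x y z : C} (g : hom y z) (f : hom x y) :
  is_iso g -> is_iso f -> is_iso (g ∘ f).
Proof.
  intros [g' [Hg Hg']] [f' [Hf Hf']]. exists (f' ∘ g'). split.
  - rewrite compA, <- (compA f'), Hg, comp_id_r. exact Hf.
  - rewrite compA, <- (compA g), Hf', comp_id_r. exact Hg'.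
Qed.

Lemma is_iso_tm {C : SMC} {x x' y y' : C} (f : hom x x') (g : hom y y') :
  is_iso f -> is_iso g -> is_iso (f ⊠ g).
Proof.
  intros [f' [Hf Hf']] [g' [Hg Hg']]. exists (f' ⊠ g').
  split; rewrite <- tm_compE; [rewrite Hf, Hg | rewrite Hf', Hg']; apply tm_id.
Qed.

Lemma inv_of_l {C : Cat} {x y : C} (f : hom x y) (H : is_iso f) : inv_of f H ∘ f = idm x.
Proof. unfold inv_of. destruct (constructive_indefinite_description _ H) as [g [Hl Hr]]. exact Hl. Qed.

Lemma inv_of_r {C : Cat} {x y : C} (f : hom x y) (H : is_iso f) : f ∘ inv_of f H = idm y.
Proof. unfold inv_of. destruct (constructive_indefinite_description _ H) as [g [Hl Hr]]. exact Hr. Qed.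

Lemma inv_of_eq {C : Cat} {x y : C} (f : hom x y) (g : hom y x) (H : is_iso f) :
  f ∘ g = idm y -> inv_of f H = g.
Proof.
  intros Hfg. rewrite <- (comp_id_r _ _ _ (inv_of f H)), <- Hfg, compA, inv_of_l.
  apply comp_id_l.
Qed.

Lemma comp_id_comm {C : Cat} {x y : C} (f : hom x y) : f ∘ idm x = idm y ∘ f.
Proof. rewrite comp_id_l. apply comp_id_r. Qed.

Lemma monoidal_id_assoc (C : SMC) (x y z : C) :
  assoc x y z ∘ idm _ ∘ (idm (x ⊗ y) ⊠ idm z) = idm _ ∘ (idm x ⊠ idm (y ⊗ z)) ∘ assoc x y z.
Proof. rewrite !tm_id, !comp_id_r, comp_id_l. reflexivity. Qed.

Lemma monoidal_id_lunit (C : SMC) (x : C) : lunit x ∘ idm _ ∘ (idm (tunit C) ⊠ idm x) = lunit x.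
Proof. rewrite tm_id, !comp_id_r. reflexivity. Qed.

Lemma monoidal_id_runit (C : SMC) (x : C) : runit x ∘ idm _ ∘ (idm x ⊠ idm (tunit C)) = runit x.
Proof. rewrite tm_id, !comp_id_r. reflexivity. Qed.

Section TensorTwist.

Variable C : SMC.
Variables θ θ' : forall c : C, hom c c.
Hypothesis θ_nat : forall (x y : C) (f : hom x y), θ y ∘ f = f ∘ θ x.
Hypothesis θ'_nat : forall (x y : C) (f : hom x y), θ' y ∘ f = f ∘ θ' x.
Hypothesis θ'θ : forall c : C, θ' c ∘ θ c = idm c.
Hypothesis θθ' : forall c : C, θ c ∘ θ' c = idm c.

Definition tensor_twist (a b : C) : hom (a ⊗ b) (a ⊗ b) := θ (a ⊗ b) ∘ (θ' a ⊠ θ' b).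

Lemma tensor_twist_nat (a a' b b' : C) (f : hom a a') (g : hom b b') :
  tensor_twist a' b' ∘ (f ⊠ g) = (f ⊠ g) ∘ tensor_twist a b.
Proof.
  unfold tensor_twist.
  rewrite <- compA, <- tm_compE, !θ'_nat, tm_compE, !compA, θ_nat. reflexivity.
Qed.

Lemma tensor_twist_iso (a b : C) : is_iso (tensor_twist a b).
Proof.
  apply is_iso_comp; [|apply is_iso_tm]; [exists (θ' (a ⊗ b)) | exists (θ a) | exists (θ b)];
    split; auto.
Qed.

Lemma tensor_twist_tm_θ (a b : C) : tensor_twist a b ∘ (θ a ⊠ θ b) = θ (a ⊗ b).
Proof. unfold tensor_twist. rewrite <- compA, <- tm_compE, !θ'θ, tm_id. apply comp_id_r. Qed.

Lemma tensor_twist_cocycle (a b c : C) :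
  assoc a b c ∘ tensor_twist (a ⊗ b) c ∘ (tensor_twist a b ⊠ idm c)
  = tensor_twist a (b ⊗ c) ∘ (idm a ⊠ tensor_twist b c) ∘ assoc a b c.
Proof.
  assert (Hl : tensor_twist (a ⊗ b) c ∘ (tensor_twist a b ⊠ idm c)
               = θ _ ∘ ((θ' a ⊠ θ' b) ⊠ θ' c)).
  { unfold tensor_twist at 1 2.
    rewrite <- compA, <- tm_compE, compA, θ'θ, comp_id_l, comp_id_r. reflexivity. }
  assert (Hr : tensor_twist a (b ⊗ c) ∘ (idm a ⊠ tensor_twist b c)
               = θ _ ∘ (θ' a ⊠ (θ' b ⊠ θ' c))).
  { unfold tensor_twist at 1 2.
    rewrite <- compA, <- tm_compE, compA, θ'θ, comp_id_l, comp_id_r. reflexivity. }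
  rewrite <- compA, Hl, Hr, compA, <- θ_nat, <- !compA, assoc_nat. reflexivity.
Qed.

Lemma tensor_twist_lunit (a : C) :
  lunit a ∘ tensor_twist (tunit C) a ∘ (θ (tunit C) ⊠ idm a) = lunit a.
Proof.
  unfold tensor_twist.
  rewrite <- !compA, <- tm_compE, θ'θ, comp_id_r, compA, <- θ_nat, <- compA, <- lunit_nat.
  rewrite compA, θθ'. apply comp_id_l.
Qed.

Lemma tensor_twist_runit (a : C) :
  runit a ∘ tensor_twist a (tunit C) ∘ (idm a ⊠ θ (tunit C)) = runit a.
Proof.
  unfold tensor_twist.
  rewrite <- !compA, <- tm_compE, θ'θ, comp_id_r, compA, <- θ_nat, <- compA, <- runit_nat.
  rewrite compA, θθ'. apply comp_id_l.
Qed.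

Lemma tensor_twist_braid (a b : C) :
  braid a b ∘ tensor_twist a b = tensor_twist b a ∘ braid a b.
Proof.
  unfold tensor_twist. rewrite compA, <- θ_nat, <- !compA, braid_nat. reflexivity.
Qed.

Variable d : AIData C.
Hypothesis Hd : is_SMAI C d.

(* Literally the tensorator of [twisted] (with θ = i, θ' = i^-1), so the lemmas below apply
   to it by conversion. *)
Definition twisted_chi (x y : C) : hom (dob d x ⊗ dob d y) (dob d (x ⊗ y)) :=
  chi d x y ∘ θ (dob d x ⊗ dob d y) ∘ (θ' (dob d x) ⊠ θ' (dob d y)).

Lemma twisted_chiE (x y : C) : twisted_chi x y = chi d x y ∘ tensor_twist (dob d x) (dob d y).
Proof. symmetry. apply compA. Qed.

Lemma twisted_chi_iso (x y : C) : is_iso (twisted_chi x y).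
Proof.
  rewrite twisted_chiE. apply is_iso_comp; [apply (chi_iso _ _ Hd) | apply tensor_twist_iso].
Qed.

Lemma twisted_chi_nat (x x' y y' : C) (f : hom x x') (g : hom y y') :
  dhom d (f ⊠ g) ∘ twisted_chi x' y' = twisted_chi x y ∘ (dhom d f ⊠ dhom d g).
Proof.
  now rewrite !twisted_chiE, compA, (chi_nat _ _ Hd), <- !compA, tensor_twist_nat.
Qed.

Lemma twisted_chi_assoc (x y z : C) :
  twisted_chi (x ⊗ y) z ∘ (twisted_chi x y ⊠ idm (dob d z))
  = dhom d (assoc x y z) ∘ twisted_chi x (y ⊗ z) ∘ (idm (dob d x) ⊠ twisted_chi y z)
    ∘ assoc (dob d x) (dob d y) (dob d z).
Proof.
  rewrite !twisted_chiE, tm_comp_idl, tm_comp_idr.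
  transitivity (chi d (x ⊗ y) z ∘ (chi d x y ⊠ idm _) ∘ (tensor_twist _ _ ∘ (tensor_twist _ _ ⊠ idm _))).
  { rewrite compA, <- (compA (chi d (x ⊗ y) z)), tensor_twist_nat.
    now rewrite !compA. }
  rewrite (chi_assoc _ _ Hd), <- !compA. do 2 f_equal.
  rewrite (compA (tensor_twist _ _)), (tensor_twist_nat _ _ _ _ (idm _) (chi d y z)).
  rewrite <- compA. f_equal.
  rewrite !compA. now apply tensor_twist_cocycle.
Qed.

Lemma twisted_chi_lunit (x : C) :
  twisted_chi (tunit C) x ∘ ((uu d ∘ θ (tunit C)) ⊠ idm (dob d x))
  = dhom d (lunit x) ∘ lunit (dob d x).
Proof.
  rewrite twisted_chiE, tm_comp_idl, compA, <- (compA (chi d _ _)), tensor_twist_nat.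
  now rewrite compA, (chi_lunit _ _ Hd), <- !compA, (compA (lunit _)), tensor_twist_lunit.
Qed.

Lemma twisted_chi_runit (x : C) :
  twisted_chi x (tunit C) ∘ (idm (dob d x) ⊠ (uu d ∘ θ (tunit C)))
  = dhom d (runit x) ∘ runit (dob d x).
Proof.
  rewrite twisted_chiE, tm_comp_idr, compA, <- (compA (chi d _ _)), tensor_twist_nat.
  now rewrite compA, (chi_runit _ _ Hd), <- !compA, (compA (runit _)), tensor_twist_runit.
Qed.

Lemma twisted_chi_braid (x y : C) :
  dhom d (braid y x) ∘ twisted_chi x y = twisted_chi y x ∘ braid (dob d x) (dob d y).
Proof.
  now rewrite !twisted_chiE, compA, (chi_braid _ _ Hd), <- !compA, tensor_twist_braid.
Qed.

Lemma twisted_chi_tm_θ (c1 c2 : C) (h1 : hom c1 (dob d c1)) (h2 : hom c2 (dob d c2)) :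
  twisted_chi c1 c2 ∘ ((h1 ∘ θ c1) ⊠ (h2 ∘ θ c2)) = chi d c1 c2 ∘ (h1 ⊠ h2) ∘ θ (c1 ⊗ c2).
Proof.
  rewrite twisted_chiE, tm_compE, compA, <- (compA (chi d _ _)), tensor_twist_nat.
  now rewrite <- !compA, tensor_twist_tm_θ.
Qed.

End TensorTwist.

Lemma CP_idm_unitary (C : SMC) (d : AIData C) (P : forall c : C, hom c (dob d c) -> Prop)
  (HP : is_mon_pos C d P) (Hd : is_SMAI C d) (c : C) (h1 h2 : hom c (dob d c))
  (p1 : P c h1) (p2 : P c h2) :
  h1 = h2 ->
  @is_unitary (CP C d P HP) (existT _ c (exist _ h1 p1)) (existT _ c (exist _ h2 p2)) (idm c).
Proof.
  intros <-. split.
  - change (inv_of h1 (proj1 (pos_herm C d P HP c h1 p1)) ∘ dhom d (idm c) ∘ h1 ∘ idm c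
            = idm c).
    rewrite (d_id _ _ Hd), !comp_id_r. apply inv_of_l.
  - change (idm c ∘ (inv_of h1 (proj1 (pos_herm C d P HP c h1 p1)) ∘ dhom d (idm c) ∘ h1)
            = idm c).
    rewrite (d_id _ _ Hd), comp_id_l, comp_id_r. apply inv_of_l.
Qed.

Section Refinement.

Variable C : SMC.
Variable d : AIData C.
Hypothesis Hd : is_SMAI C d.
Variables m i : forall c : C, hom c c.
Hypothesis Hm : is_mon_AI_Z2_action C d m.
Hypothesis Hi : is_AI_Z4_refinement C d m i.

Local Notation j := (i_inv C m i).

Let i_natural : forall (x y : C) (f : hom x y), i y ∘ f = f ∘ i x := i_nat _ _ _ _ Hi.

Lemma m_i_comm (c : C) : m c ∘ i c = i c ∘ m c.
Proof. rewrite <- (i_sq _ _ _ _ Hi). symmetry. apply compA. Qed.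

Lemma i_inv_i (c : C) : j c ∘ i c = idm c.
Proof. unfold i_inv. rewrite <- compA, (i_sq _ _ _ _ Hi). apply (m_invol _ _ _ Hm). Qed.

Lemma i_i_inv (c : C) : i c ∘ j c = idm c.
Proof.
  unfold i_inv. rewrite compA, <- m_i_comm, <- compA, (i_sq _ _ _ _ Hi).
  apply (m_invol _ _ _ Hm).
Qed.

Lemma i_inv_m (c : C) : j c ∘ m c = i c.
Proof. unfold i_inv. rewrite <- compA, <- m_i_comm, compA, (m_invol _ _ _ Hm). apply comp_id_l. Qed.

Lemma i_inv_nat (x y : C) (f : hom x y) : j y ∘ f = f ∘ j x.
Proof.
  unfold i_inv. rewrite <- compA, i_natural, compA, (m_nat _ _ _ Hm). symmetry. apply compA.
Qed.

Lemma i_iso (c : C) : is_iso (i c).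
Proof. exists (j c). split; [apply i_inv_i | apply i_i_inv]. Qed.

Lemma d_i (x : C) : dhom d (i x) = j (dob d x).
Proof.
  rewrite <- (comp_id_r _ _ _ (dhom d (i x))), <- (i_i_inv (dob d x)), compA, (i_anti_l _ _ _ _ Hi).
  apply comp_id_l.
Qed.

Lemma d_i_inv (x : C) : dhom d (j x) = i (dob d x).
Proof.
  unfold i_inv at 1. rewrite (d_comp _ _ Hd), d_i, (m_anti _ _ _ Hm). apply i_inv_m.
Qed.

(* The one place where monoidality of (-1)^F is used. *)
Lemma tensor_twist_swap (a b : C) : tensor_twist C j i a b = tensor_twist C i j a b.
Proof.
  unfold tensor_twist, i_inv.
  rewrite tm_compE, <- (m_mon_tensor _ _ _ Hm), compA, m_i_comm. reflexivity.
Qed.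

Lemma d_tensor_twist (a b : C) :
  dhom d (tensor_twist C i j a b) ∘ chi d a b
  = chi d a b ∘ tensor_twist C i j (dob d a) (dob d b).
Proof.
  rewrite <- (tensor_twist_swap (dob d a)). unfold tensor_twist.
  rewrite (d_comp _ _ Hd), d_i, <- compA, i_inv_nat, compA, (chi_nat _ _ Hd), !d_i_inv.
  rewrite <- compA, <- i_inv_nat. reflexivity.
Qed.

Local Notation chi' := (twisted_chi C i j d).

Lemma twisted_eta_mon (x y : C) :
  dhom d (chi' x y) ∘ (eta d (x ⊗ y) ∘ m (x ⊗ y))
  = chi' (dob d x) (dob d y) ∘ ((eta d x ∘ m x) ⊠ (eta d y ∘ m y)).
Proof.
  rewrite !twisted_chiE, (d_comp _ _ Hd), compA, <- (compA (dhom d (tensor_twist _ _ _ _ _))).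
  rewrite (eta_mon _ _ Hd), compA, d_tensor_twist, tm_compE, <- (m_mon_tensor _ _ _ Hm).
  symmetry. apply compA.
Qed.

Lemma twisted_eta_unit :
  dhom d (uu d ∘ i (tunit C)) ∘ (eta d (tunit C) ∘ m (tunit C)) = uu d ∘ i (tunit C).
Proof.
  rewrite (d_comp _ _ Hd), d_i, (m_mon_unit _ _ _ Hm), comp_id_r, <- compA, (eta_unit _ _ Hd).
  rewrite i_inv_nat. unfold i_inv. rewrite (m_mon_unit _ _ _ Hm), comp_id_l. reflexivity.
Qed.

Lemma twisted_eta_invol (x : C) :
  dhom d (eta d x ∘ m x) ∘ (eta d (dob d x) ∘ m (dob d x)) = idm (dob d x).
Proof.
  rewrite (d_comp _ _ Hd), (m_anti _ _ _ Hm), <- compA, (compA (dhom d _)), (eta_invol _ _ Hd).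
  rewrite comp_id_l. apply (m_invol _ _ _ Hm).
Qed.

Lemma twisted_SMAI : is_SMAI C (twisted C d m i).
Proof.
  constructor; intros; simpl.
  - apply (d_id _ _ Hd).
  - apply (d_comp _ _ Hd).
  - apply (twisted_chi_iso C i j); auto using i_inv_i, i_i_inv.
  - apply is_iso_comp; [apply (u_iso _ _ Hd) | apply i_iso].
  - apply (twisted_chi_nat C i j); auto using i_inv_nat.
  - apply (twisted_chi_assoc C i j); auto using i_inv_nat, i_inv_i.
  - apply (twisted_chi_lunit C i j); auto using i_inv_nat, i_inv_i, i_i_inv.
  - apply (twisted_chi_runit C i j); auto using i_inv_nat, i_inv_i, i_i_inv.
  - apply (twisted_chi_braid C i j); auto.
  - rewrite compA, (eta_nat _ _ Hd), <- !compA, (m_nat _ _ _ Hm). reflexivity.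
  - apply is_iso_comp; [apply (eta_iso _ _ Hd) | exists (m x); split; apply (m_invol _ _ _ Hm)].
  - apply twisted_eta_mon.
  - apply twisted_eta_unit.
  - apply twisted_eta_invol.
Qed.

Lemma twisted_hermitian (c : C) (h : hom c (dob d c)) :
  is_hermitian C d c h -> is_hermitian C (twisted C d m i) c (h ∘ i c).
Proof.
  intros [Hiso Hh]. split.
  - apply is_iso_comp; [exact Hiso | apply i_iso].
  - simpl. rewrite (d_comp _ _ Hd), d_i, <- compA, (compA (dhom d h)), Hh.
    rewrite compA, i_inv_nat, <- compA, i_inv_m. reflexivity.
Qed.

Variable P : forall c : C, hom c (dob d c) -> Prop.
Hypothesis HP : is_mon_pos C d P.

Lemma twisted_mon_pos : is_mon_pos C (twisted C d m i) (P_twist C d P i).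
Proof.
  constructor.
  - intros c h' [h [Ph ->]]. apply twisted_hermitian, (pos_herm _ _ _ HP _ _ Ph).
  - intros c. destruct (pos_surj _ _ _ HP c) as [h Ph]. exists (h ∘ i c), h. auto.
  - intros c c' g h' Hg [h [Ph ->]]. exists (dhom d g ∘ h ∘ g). split.
    + apply (pos_transfer _ _ _ HP); assumption.
    + simpl. rewrite <- !compA, i_natural. reflexivity.
  - intros c1 c2 h1' h2' [h1 [P1 ->]] [h2 [P2 ->]]. exists (chi d c1 c2 ∘ (h1 ⊠ h2)). split.
    + apply (pos_tensor _ _ _ HP); assumption.
    + simpl. apply (twisted_chi_tm_θ C i j); auto using i_natural, i_inv_nat, i_inv_i.
  - exists (uu d). split; [apply (pos_unit _ _ _ HP) | reflexivity].
Qed.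

Lemma inv_of_twist (c : C) (h : hom c (dob d c)) (H : is_iso h) (H' : is_iso (h ∘ i c)) :
  inv_of (h ∘ i c) H' = j c ∘ inv_of h H.
Proof.
  apply inv_of_eq. rewrite <- compA, (compA (i c)), i_i_inv, comp_id_l.
  apply inv_of_r.
Qed.

Lemma twisted_dagger (c1 c2 : C) (h1 : hom c1 (dob d c1)) (h2 : hom c2 (dob d c2))
  (H1 : is_iso h1) (H1' : is_iso (h1 ∘ i c1)) (f : hom c1 c2) :
  inv_of h1 H1 ∘ dhom d f ∘ h2 = inv_of (h1 ∘ i c1) H1' ∘ dhom d f ∘ (h2 ∘ i c2).
Proof.
  rewrite (inv_of_twist c1 h1 H1), compA, <- !(compA (j c1)), i_inv_nat.
  rewrite <- (compA _ (i c2)), i_i_inv. symmetry. apply comp_id_r.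
Qed.

Definition twist_ob (X : Pob C d P) : Pob C (twisted C d m i) (P_twist C d P i) :=
  existT _ (projT1 X) (exist _ (proj1_sig (projT2 X) ∘ i (projT1 X))
    (ex_intro _ _ (conj (proj2_sig (projT2 X)) eq_refl))).

Variable HP' : is_mon_pos C (twisted C d m i) (P_twist C d P i).

Definition twist_functor :
  SMDFunctor (CP C d P HP) (CP C (twisted C d m i) (P_twist C d P i) HP').
Proof.
  refine (Build_SMDFunctor (CP C d P HP) (CP C (twisted C d m i) (P_twist C d P i) HP')
    twist_ob (fun X Y f => f) _ _ _ (fun X Y => idm (projT1 X ⊗ projT1 Y)) (idm (tunit C))
    _ _ _ _ _ _ _); intros.
  - reflexivity.
  - reflexivity.
  - apply twisted_dagger.
  - destruct x as [c1 [h1 p1]], y as [c2 [h2 p2]].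
    apply (CP_idm_unitary C (twisted C d m i) _ HP' twisted_SMAI).
    simpl. apply (twisted_chi_tm_θ C i j); auto using i_natural, i_inv_nat, i_inv_i.
  - apply (CP_idm_unitary C (twisted C d m i) _ HP' twisted_SMAI). reflexivity.
  - apply (@comp_id_comm C).
  - apply monoidal_id_assoc.
  - apply monoidal_id_lunit.
  - apply monoidal_id_runit.
  - apply (@comp_id_comm C).
Defined.

Lemma twist_functor_equivalence :
  smd_equivalent (CP C d P HP) (CP C (twisted C d m i) (P_twist C d P i) HP').
Proof.
  exists twist_functor. split; [|split].
  - intros X Y g. exists g. reflexivity.
  - intros X Y f f' E. exact E.
  - intros [c [h' [h [Ph E]]]]. exists (existT _ c (exist _ h Ph)), (idm c).
    apply (CP_idm_unitary C (twisted C d m i) _ HP' twisted_SMAI). symmetry. exact E.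
Qed.

End Refinement.

Theorem mainTheorem9 (C : SMC) (d : AIData C)
  (P : forall c : C, hom c (dob d c) -> Prop)
  (Hd : is_SMAI C d) (HP : is_mon_pos C d P)
  (m i : forall c : C, hom c c)
  (Hm : is_mon_AI_Z2_action C d m) (Hi : is_AI_Z4_refinement C d m i) :
  is_SMAI C (twisted C d m i) /\
  exists HP' : is_mon_pos C (twisted C d m i) (P_twist C d P i),
    smd_equivalent (CP C d P HP) (CP C (twisted C d m i) (P_twist C d P i) HP').
Proof.
  split.
  - exact (twisted_SMAI C d Hd m i Hm Hi).
  - exists (twisted_mon_pos C d Hd m i Hm Hi P HP).
    exact (twist_functor_equivalence C d Hd m i Hm Hi P HP _).
Qed.
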